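(* Let $q\ge1$, $d=2^q$. For $\tau\in\boldsymbol{\sigma}_q$ let $\mathcal{C}_q^\tau=\{C\in\mathcal{C}_q: C\tau C^\dagger=\pm\tau\}$. Let $V=\mathrm{span}\{\sigma\otimes\hat\sigma:\sigma,\hat\sigma\in\boldsymbol{\sigma}_q,\ \sigma\neq\hat\sigma\}\subseteq\mathcal{M}_d^{\otimes2}$ and, for $\tau\in\boldsymbol{\sigma}_q$, $V^\tau=\mathrm{span}\{\sigma\otimes\hat\sigma:\sigma,\hat\sigma\in\boldsymbol{\sigma}_q,\ \sigma\hat\sigma\in\mathbb{C}\tau\}$. Then: (1) $V=\bigoplus_{\tau'\in\boldsymbol{\sigma}_q}V^{\tau'}$. (2) Suppose that for some $\tau\in\boldsymbol{\sigma}_q$ there is a subspace $W^\tau\subseteq V^\tau$ with $\varphi^{\otimes2}(\hat C)W^\tau\subseteq W^\tau$ for all $\hat C\in\mathcal{C}_q^\tau$. Then for every $\tau'\in\boldsymbol{\sigma}_q$ there exists a subspace $W^{\tau'}\subseteq V^{\tau'}$ isomorphic to $W^\tau$ (with $W^{\tau'}$ for $\tau'=\tau$ being $W^\tau$) such that $W=\bigoplus_{\tau'\in\boldsymbol{\sigma}_q}W^{\tau'}$ satisfies $\varphi^{\otimes2}(C)W\subseteq W$ for all $C\in\mathcal{C}_q$.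
   Context: $\mathcal{M}_d$ is the space of complex $d\times d$ matrices. $X,Y,Z$ are the single-qubit Pauli matrices; $\hat{\mathcal{P}}_q$ is the set of $q$-fold tensor products of elements of $\{\mathbb{1},X,Y,Z\}$; $\boldsymbol{\sigma}_q=\{P/\sqrt d:P\in\hat{\mathcal P}_q\setminus\{\mathbb 1\}\}$. The Pauli group $\mathcal{P}_q\subset U(2^q)$ consists of all $q$-fold tensor products of elements of the group generated by $X,Z,i\mathbb 1_2$; the Clifford group is $\mathcal{C}_q=\{U\in U(2^q):U\mathcal{P}_qU^\dagger\subseteq\mathcal{P}_q\}/U(1)$ (conjugation by $C$ maps each element of $\boldsymbol\sigma_q$ to $\pm$ an element of $\boldsymbol\sigma_q$). The two-copy representation on $\mathcal{M}_d^{\otimes2}$ is $\varphi^{\otimes2}(C)(A\otimes B)=(CAC^\dagger)\otimes(CBC^\dagger)$, extended linearly. *)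

(* Complex scalars: an arbitrary numClosedFieldType C
   (e.g. the complex numbers), with conjugation conjC and 'i. *)
From HB Require Import structures.
From mathcomp Require Import all_boot all_order all_algebra all_fingroup.
From mathcomp Require Import character.
Set Implicit Arguments. Unset Strict Implicit. Unset Printing Implicit Defensive.
Import Order.TTheory GRing.Theory Num.Theory Num.Def.
Local Open Scope ring_scope.

Section Pauli.
Variable C : numClosedFieldType.

Definition adjmx m n (A : 'M[C]_(m, n)) : 'M[C]_(n, m) := (map_mx conjC A)^T.

Definition pauliX : 'M[C]_2 := \matrix_(i < 2, j < 2) (if i == j then 0 else 1).
Definition pauliY : 'M[C]_2 :=
  \matrix_(i < 2, j < 2) (if i == j then 0 else if i == 0 :> nat then - 'i else 'i).
Definition pauliZ : 'M[C]_2 :=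
  \matrix_(i < 2, j < 2) (if i == j then (if i == 0 :> nat then 1 else -1) else 0).
Definition pauli1 (a : 'I_4) : 'M[C]_2 :=
  match val a with 0 => 1%:M | 1 => pauliX | 2 => pauliY | _ => pauliZ end.

(* bit k of a basis index i of (C^2)^{\otimes q} = C^(2^q) *)
Definition qbit q (i : 'I_(2 ^ q)) (k : 'I_q) : 'I_2 := inord (odd (i %/ 2 ^ k)).

Definition pstring q := {ffun 'I_q -> 'I_4}.
HB.instance Definition _ q := Finite.on (pstring q).
Definition pauli_str q (s : pstring q) : 'M[C]_(2 ^ q) :=
  \matrix_(i, j) \prod_(k < q) pauli1 (s k) (qbit i k) (qbit j k).

(* index set of boldsymbol-sigma_q: non-identity Pauli strings *)
Definition Sig q := {s : pstring q | s != [ffun => ord0]}.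
HB.instance Definition _ q := Finite.on (Sig q).
Definition sigq q (s : Sig q) : 'M[C]_(2 ^ q) :=
  (sqrtC (2 ^ q)%:R)^-1 *: pauli_str (val s).

(* Pauli group: q-fold tensor products of elements of <X, Z, i 1>,
   i.e. the matrices i^k P with P a Pauli string *)
Definition pauli_grp q (M : 'M[C]_(2 ^ q)) : Prop :=
  exists (k : nat) (s : pstring q), M = ('i ^+ k) *: pauli_str s.

Definition unitary n (U : 'M[C]_n) : Prop := U *m adjmx U = 1%:M.

(* Clifford group (representatives; the U(1) quotient is irrelevant for the
   conjugation actions considered) *)
Definition clifford q (U : 'M[C]_(2 ^ q)) : Prop :=
  unitary U /\ forall P, pauli_grp P -> pauli_grp (U *m P *m adjmx U).

Definition clifford_tau q (tau : Sig q) (U : 'M[C]_(2 ^ q)) : Prop :=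
  clifford U /\
  (U *m sigq tau *m adjmx U = sigq tau \/ U *m sigq tau *m adjmx U = - sigq tau).

(* two-copy representation on M_d (x) M_d, realised as d^2 x d^2 matrices
   via the Kronecker product tprod (character.v) *)
Definition phi2 q (U : 'M[C]_(2 ^ q)) (X : 'M[C]_(2 ^ q * 2 ^ q)) :
  'M[C]_(2 ^ q * 2 ^ q) := tprod U U *m X *m adjmx (tprod U U).

Definition Vspace q : {vspace 'M[C]_(2 ^ q * 2 ^ q)} :=
  <<[seq tprod (sigq st.1) (sigq st.2) | st <- enum ((Sig q * Sig q)%type : predArgType)
      & sigq st.1 != sigq st.2]>>%VS.

Definition Vtau q (tau : Sig q) : {vspace 'M[C]_(2 ^ q * 2 ^ q)} :=
  <<[seq tprod (sigq st.1) (sigq st.2) | st <- enum ((Sig q * Sig q)%type : predArgType)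
      & (sigq st.1 *m sigq st.2) \in <[sigq tau]>%VS]>>%VS.

Definition phi2_stable q (U : 'M[C]_(2 ^ q)) (W : {vspace 'M[C]_(2 ^ q * 2 ^ q)}) :=
  forall X, X \in W -> phi2 U X \in W.

Definition vs_iso n (W W' : {vspace 'M[C]_n}) : Prop :=
  exists f : 'End('M[C]_n), (f @: W)%VS = W' /\ (lker f :&: W)%VS = 0%VS.

End Pauli.

From HB Require Import structures.
From mathcomp Require Import all_boot all_order all_algebra all_fingroup.
From mathcomp Require Import character zify.
Set Implicit Arguments. Unset Strict Implicit. Unset Printing Implicit Defensive.
Import Order.TTheory GRing.Theory Num.Theory Num.Def.
Local Open Scope ring_scope.

(* The normalised Pauli strings are orthonormal for the Hilbert-Schmidt product
   tr (X^dagger Y), hence so are the products sigma (x) sigma'.  Since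
   sigma sigma' is a multiple of a single Pauli string, the generators of
   different V^tau are orthogonal, so their sum is direct and it is V.
   For (2), the Clifford group acts transitively on the sigma's up to sign:
   two non-identity strings always anticommute with a common third string r,
   and for anticommuting P_a, P_b the Clifford unitary (P_a + P_b)/sqrt 2
   conjugates P_a to P_b.  Picking U_t with U_t tau U_t^dagger = +-t, put
   W^t := phi(U_t) W^tau.  A Clifford C with C t C^dagger = +-s maps W^t into
   W^s, because U_s^dagger C U_t lies in C_q^tau and thus stabilises W^tau. *)

Lemma ord_mul_split m n (k : 'I_(m * n)) :
  exists (i : 'I_m) (j : 'I_n), k = (i * n + j)%N :> nat.
Proof.
have n_gt0 : (0 < n)%N by case: n k => [|//] [k]; rewrite muln0.
have lt_kn : (k %/ n < m)%N by rewrite ltn_divLR // ltn_ord.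
by exists (Ordinal lt_kn), (Ordinal (ltn_pmod k n_gt0)); rewrite /= -divn_eq.
Qed.

Section Kronecker.
Variable F : fieldType.

Lemma trow_entry n1 (A : 'rV[F]_n1) m2 n2 (B : 'M[F]_(m2, n2))
    (i : 'I_m2) (l : 'I_(n1 * n2)) (j1 : 'I_n1) (j2 : 'I_n2) :
  l = (j1 * n2 + j2)%N :> nat -> trow A B i l = A 0 j1 * B i j2.
Proof.
elim: n1 A l j1 => [|n1 IH] A l [[|j1] lt_j1] //= l_def; rewrite mxE.
  case: splitP => [l' l'_def|l' l'_def]; last by move: l_def (ltn_ord j2); rewrite l'_def; lia.
  by rewrite !mxE; congr (A _ _ * B _ _); apply: val_inj; move: l_def; rewrite l'_def.
case: splitP => [l' l'_def|l' l'_def]; first by move: l_def (ltn_ord l'); rewrite l'_def; lia.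
have lt_j1' : (j1 < n1)%N by [].
rewrite (IH _ _ (Ordinal lt_j1')) /= ?mxE; last by move: l_def; rewrite l'_def; lia.
by congr (A _ _ * _); apply: val_inj.
Qed.

Lemma tprod_entry m1 n1 (A : 'M[F]_(m1, n1)) m2 n2 (B : 'M[F]_(m2, n2))
    (k : 'I_(m1 * m2)) (l : 'I_(n1 * n2))
    (i1 : 'I_m1) (i2 : 'I_m2) (j1 : 'I_n1) (j2 : 'I_n2) :
  k = (i1 * m2 + i2)%N :> nat -> l = (j1 * n2 + j2)%N :> nat ->
  tprod A B k l = A i1 j1 * B i2 j2.
Proof.
elim: m1 A k i1 => [|m1 IH] A k [[|i1] lt_i1] //= k_def l_def; rewrite mxE.
  case: splitP => [k' k'_def|k' k'_def]; last by move: k_def (ltn_ord i2); rewrite k'_def; lia.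
  rewrite (trow_entry _ _ _ l_def) !mxE.
  by congr (A _ _ * B _ _); apply: val_inj; move: k_def; rewrite k'_def.
case: splitP => [k' k'_def|k' k'_def]; first by move: k_def (ltn_ord k'); rewrite k'_def; lia.
have lt_i1' : (i1 < m1)%N by [].
rewrite (IH _ _ (Ordinal lt_i1') _ l_def) /= ?mxE; last by move: k_def; rewrite k'_def; lia.
by congr (A _ _ * _); apply: val_inj.
Qed.

Lemma tprodZ m1 n1 m2 n2 (a b : F) (A : 'M[F]_(m1, n1)) (B : 'M[F]_(m2, n2)) :
  tprod (a *: A) (b *: B) = (a * b) *: tprod A B.
Proof.
apply/matrixP => k l; have [i1 [i2 k_def]] := ord_mul_split k.
have [j1 [j2 l_def]] := ord_mul_split l.
by rewrite mxE !(tprod_entry _ _ k_def l_def) !mxE mulrACA.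
Qed.

End Kronecker.

Section Adjoint.
Variable C : numClosedFieldType.

Lemma adjmxM m n p (A : 'M[C]_(m, n)) (B : 'M[C]_(n, p)) :
  adjmx (A *m B) = adjmx B *m adjmx A.
Proof. by rewrite /adjmx map_mxM trmx_mul. Qed.

Lemma adjmxD m n (A B : 'M[C]_(m, n)) : adjmx (A + B) = adjmx A + adjmx B.
Proof. by apply/matrixP => i j; rewrite !mxE rmorphD. Qed.

Lemma adjmxZ m n (a : C) (A : 'M[C]_(m, n)) : adjmx (a *: A) = a^* *: adjmx A.
Proof. by apply/matrixP => i j; rewrite !mxE rmorphM. Qed.

Lemma adjmxK m n (A : 'M[C]_(m, n)) : adjmx (adjmx A) = A.
Proof. by apply/matrixP => i j; rewrite !mxE conjCK. Qed.

Lemma adjmx1 n : adjmx (1%:M : 'M[C]_n) = 1%:M.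
Proof. by rewrite /adjmx map_mx1 trmx1. Qed.

Lemma conjmx_mul n (A B X : 'M[C]_n) :
  A *m B *m X *m adjmx (A *m B) = A *m (B *m X *m adjmx B) *m adjmx A.
Proof. by rewrite adjmxM !mulmxA. Qed.

Lemma unitary_conjK n (U X : 'M[C]_n) : unitary U -> adjmx U *m (U *m X *m adjmx U) *m U = X.
Proof. by move/mulmx1C => adjU_unit; rewrite !mulmxA adjU_unit mul1mx -mulmxA adjU_unit mulmx1. Qed.

Lemma unitary_conjM n (U X Y : 'M[C]_n) : unitary U ->
  (U *m X *m adjmx U) *m (U *m Y *m adjmx U) = U *m (X *m Y) *m adjmx U.
Proof. by move/mulmx1C => adjU_unit; rewrite !mulmxA -(mulmxA _ (adjmx U)) adjU_unit mulmx1. Qed.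

Lemma adjmx_tprod m1 n1 m2 n2 (A : 'M[C]_(m1, n1)) (B : 'M[C]_(m2, n2)) :
  adjmx (tprod A B) = tprod (adjmx A) (adjmx B).
Proof.
apply/matrixP => k l; have [i1 [i2 k_def]] := ord_mul_split k.
have [j1 [j2 l_def]] := ord_mul_split l.
by rewrite !mxE (tprod_entry _ _ l_def k_def) (tprod_entry _ _ k_def l_def) !mxE rmorphM.
Qed.

End Adjoint.

(* Letters 0, 1, 2, 3 stand for 1, X, Y, Z, as in [pauli1]; [pmul] and [pphase]
   give the product up to the phase i ^+ pphase, e.g. X Y = i Z. *)
Definition pmul_nat (a b : nat) : nat :=
  match a, b with
  | 0, b => b | a, 0 => a
  | 1, 2 | 2, 1 => 3 | 1, 3 | 3, 1 => 2 | 2, 3 | 3, 2 => 1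
  | _, _ => 0
  end.
Definition pmul (a b : 'I_4) : 'I_4 := inord (pmul_nat a b).

Definition pphase (a b : 'I_4) : nat :=
  match val a, val b with
  | 1, 2 | 2, 3 | 3, 1 => 1
  | 2, 1 | 3, 2 | 1, 3 => 3
  | _, _ => 0
  end.

Definition panti (a b : 'I_4) : bool := [&& val a != 0, val b != 0 & val a != val b].

Ltac case_I4 a := let lt_a := fresh "lt_a" in case: a => [[|[|[|[|a]]]] lt_a] //.

Definition partner (a : 'I_4) : 'I_4 := if val a == 1 then inord 3 else inord 1.

Lemma panti_partner (a : 'I_4) : val a != 0 -> panti a (partner a).
Proof. by case_I4 a; rewrite /panti /partner /= ?inordK. Qed.

Lemma panti_pmul (a b : 'I_4) : val a != 0 -> val b != 0 -> val a != val b ->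
  panti a (pmul a b) && panti b (pmul a b).
Proof. by case_I4 a; case_I4 b; rewrite /panti /pmul /= ?inordK. Qed.

Lemma pmul_eq0 (a b : 'I_4) : (pmul a b == ord0) = (a == b).
Proof. by case_I4 a; case_I4 b; rewrite -val_eqE /pmul /= inordK. Qed.

Section SingleQubit.
Variable C : numClosedFieldType.
Local Notation P := (pauli1 C).

Lemma mulii : 'i * 'i = -1 :> C. Proof. by rewrite -expr2 sqrCi. Qed.

Ltac pauli_entries :=
  apply/matrixP => -[[|[|?]] ?] -[[|[|?]] ?] //;
  rewrite !mxE !big_ord_recl !big_ord0 !mxE /= ?mxE /=
    ?(expr0, expr1, exprS, scale1r, mul0r, mulr0, add0r, addr0,
      mul1r, mulr1, mulrN, mulNr, opprK, oppr0, mulii).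

Lemma pauli1M (a b : 'I_4) : P a *m P b = 'i ^+ pphase a b *: P (pmul a b).
Proof. by case_I4 a; case_I4 b; rewrite /pmul /pauli1 /= ?inordK //; pauli_entries. Qed.

Lemma pauli1_comm (a b : 'I_4) : P b *m P a = (-1) ^+ panti a b *: (P a *m P b).
Proof. by case_I4 a; case_I4 b; rewrite /panti /pauli1 /=; pauli_entries. Qed.

Lemma pauli1_sq (a : 'I_4) : P a *m P a = 1%:M.
Proof. by case_I4 a; rewrite /pauli1 /=; pauli_entries. Qed.

Lemma pauli1_adj (a : 'I_4) : adjmx (P a) = P a.
Proof.
case_I4 a; rewrite /adjmx /pauli1 /=; apply/matrixP => -[[|[|?]] ?] -[[|[|?]] ?] //;
by rewrite !mxE /= ?mxE /= ?(rmorph0, rmorph1, rmorphN) /= ?(conjCi, opprK).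
Qed.

Lemma pauli1_tr (a : 'I_4) : \tr (P a) = if val a == 0 then 2 else 0.
Proof.
by case_I4 a; rewrite /mxtrace /pauli1 /= !big_ord_recl !big_ord0 !mxE /= ?mxE /=
  ?(mul0r, mulr0, add0r, addr0, subrr).
Qed.

End SingleQubit.

Lemma eq_from_binary_digits q (i j : nat) : (i < 2 ^ q)%N -> (j < 2 ^ q)%N ->
  (forall k, (k < q)%N -> odd (i %/ 2 ^ k) = odd (j %/ 2 ^ k)) -> i = j.
Proof.
elim: q i j => [|q IH] i j lt_i lt_j eq_digits; first by move: lt_i lt_j; rewrite expn0; lia.
have eq_half : (i %/ 2 = j %/ 2)%N.
  apply: IH; rewrite ?ltn_divLR -?expnSr // => k lt_kq.
  by rewrite -!divnMA -expnS; apply: eq_digits.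
have := eq_digits 0%N isT; rewrite expn0 !divn1 => eq_odd.
by rewrite (divn_eq i 2) (divn_eq j 2) eq_half !modn2 eq_odd.
Qed.

Section QubitTensor.
Variables (C : numClosedFieldType) (q : nat).

Definition qbits (i : 'I_(2 ^ q)) : {ffun 'I_q -> 'I_2} := [ffun k => qbit i k].

Lemma qbits_inj : injective qbits.
Proof.
move=> i j /ffunP eq_ij; apply/val_inj/(@eq_from_binary_digits q); rewrite ?ltn_ord //.
move=> k lt_kq; have := eq_ij (Ordinal lt_kq); rewrite !ffunE /qbit.
by move/(congr1 val); rewrite /= !inordK ?leq_b1 //; do 2!case: odd.
Qed.

Lemma sum_qbits (F : {ffun 'I_q -> 'I_2} -> C) :
  \sum_(i : 'I_(2 ^ q)) F (qbits i) = \sum_f F f.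
Proof.
have [g qbitsK gK] : bijective qbits.
  by apply: (inj_card_bij qbits_inj); rewrite card_ffun !card_ord.
by rewrite (reindex qbits) //; exists g.
Qed.

(* The Kronecker product of M 0, ..., M (q - 1), indices read in binary. *)
Definition qtensor (M : 'I_q -> 'M[C]_2) : 'M[C]_(2 ^ q) :=
  \matrix_(i, j) \prod_(k < q) M k (qbit i k) (qbit j k).

Lemma eq_qtensor (M N : 'I_q -> 'M[C]_2) : M =1 N -> qtensor M = qtensor N.
Proof. by move=> eqMN; apply/matrixP => i j; rewrite !mxE; apply: eq_bigr => k _; rewrite eqMN. Qed.

Lemma qtensorM (M N : 'I_q -> 'M[C]_2) :
  qtensor M *m qtensor N = qtensor (fun k => M k *m N k).
Proof.
apply/matrixP => i j; rewrite !mxE.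
under eq_bigr do rewrite !mxE -big_split /=.
under [RHS]eq_bigr do rewrite mxE.
rewrite bigA_distr_bigA /=.
rewrite -(sum_qbits (fun f => \prod_k (M k (qbit i k) (f k) * N k (f k) (qbit j k)))).
by apply: eq_bigr => l _; apply: eq_bigr => k _; rewrite ffunE.
Qed.

Lemma mxtrace_qtensor (M : 'I_q -> 'M[C]_2) : \tr (qtensor M) = \prod_k \tr (M k).
Proof.
rewrite /mxtrace; under [LHS]eq_bigr do rewrite mxE.
rewrite bigA_distr_bigA /= -(sum_qbits (fun f => \prod_k M k (f k) (f k))).
by apply: eq_bigr => l _; apply: eq_bigr => k _; rewrite ffunE.
Qed.

Lemma adjmx_qtensor (M : 'I_q -> 'M[C]_2) : adjmx (qtensor M) = qtensor (fun k => adjmx (M k)).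
Proof. by apply/matrixP => i j; rewrite !mxE rmorph_prod; apply: eq_bigr => k _; rewrite !mxE. Qed.

Lemma qtensorZ (c : 'I_q -> C) (M : 'I_q -> 'M[C]_2) :
  qtensor (fun k => c k *: M k) = (\prod_k c k) *: qtensor M.
Proof. by apply/matrixP => i j; rewrite !mxE -big_split; apply: eq_bigr => k _; rewrite !mxE. Qed.

Lemma qtensor1 : qtensor (fun=> 1%:M) = 1%:M.
Proof.
apply/matrixP => i j; rewrite !mxE; have [->|neq_ij] := eqVneq i j.
  by rewrite big1 // => k _; rewrite mxE eqxx.
have [k neq_k] : exists k, qbit i k != qbit j k.
  apply/existsP; apply: contraNT neq_ij; rewrite negb_exists => /forallP eq_k.
  by apply/eqP/qbits_inj/ffunP => k; rewrite !ffunE; apply/eqP/negPn/eq_k.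
by rewrite (bigD1 k) //= mxE (negbTE neq_k) mul0r.
Qed.

End QubitTensor.

Section PauliStrings.
Variables (C : numClosedFieldType) (q : nat).
Local Notation P := (pauli_str C).

Definition idstr : pstring q := [ffun => ord0].
Definition mulstr (s r : pstring q) : pstring q := [ffun k => pmul (s k) (r k)].
Definition phase_str (s r : pstring q) : nat := (\sum_k pphase (s k) (r k))%N.
Definition anti_str (s r : pstring q) : nat := (\sum_k panti (s k) (r k))%N.

Lemma pauli_strE (s : pstring q) : P s = qtensor (fun k => pauli1 C (s k)).
Proof. by []. Qed.

Lemma pauli_strM (s r : pstring q) : P s *m P r = 'i ^+ phase_str s r *: P (mulstr s r).
Proof.
rewrite !pauli_strE qtensorM -prodrXr -qtensorZ.
by apply: eq_qtensor => k; rewrite pauli1M ffunE.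
Qed.

Lemma pauli_str_comm (s r : pstring q) :
  P r *m P s = (-1) ^+ anti_str s r *: (P s *m P r).
Proof.
rewrite !pauli_strE !qtensorM -prodrXr -qtensorZ.
by apply: eq_qtensor => k; rewrite pauli1_comm.
Qed.

Lemma anti_strC (s r : pstring q) : anti_str s r = anti_str r s.
Proof. by apply: eq_bigr => k _; rewrite /panti andbCA; congr (_ && (_ && _)); rewrite eq_sym. Qed.

Lemma pauli_str_sq (s : pstring q) : P s *m P s = 1%:M.
Proof. by rewrite pauli_strE qtensorM -qtensor1; apply: eq_qtensor => k; rewrite pauli1_sq. Qed.

Lemma pauli_str_adj (s : pstring q) : adjmx (P s) = P s.
Proof. by rewrite pauli_strE adjmx_qtensor; apply: eq_qtensor => k; rewrite pauli1_adj. Qed.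

Lemma pauli_str_id : P idstr = 1%:M.
Proof. by rewrite pauli_strE -qtensor1; apply: eq_qtensor => k; rewrite ffunE. Qed.

Lemma neq_idstr (s : pstring q) : (s != idstr) = [exists k, val (s k) != 0%N].
Proof.
apply/idP/idP => [neq_s|/existsP[k nz_k]]; last by apply: contraNneq nz_k => ->; rewrite ffunE.
apply: contraNT neq_s; rewrite negb_exists => /forallP zero_s.
by apply/eqP/ffunP => k; rewrite ffunE; apply/val_inj/eqP/negPn/zero_s.
Qed.

Lemma pauli_str_tr (s : pstring q) :
  \tr (P s) = if s == idstr then (2 ^ q)%:R else 0.
Proof.
rewrite pauli_strE mxtrace_qtensor; under eq_bigr do rewrite pauli1_tr.
have [->|neq_s] := eqVneq s idstr.
  by rewrite natrX -[in RHS](card_ord q) -prodr_const; apply: eq_bigr => k _; rewrite ffunE.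
have /existsP[k nz_k] : [exists k, val (s k) != 0%N] by rewrite -neq_idstr.
by rewrite (bigD1 k) //= (negPf nz_k) mul0r.
Qed.

Lemma mulstr_eq_id (s r : pstring q) : (mulstr s r == idstr) = (s == r).
Proof.
apply/eqP/eqP => [/ffunP eq_sr|->].
  by apply/ffunP => k; apply/eqP; rewrite -pmul_eq0; move: (eq_sr k); rewrite !ffunE => ->.
by apply/ffunP => k; rewrite !ffunE; apply/eqP; rewrite pmul_eq0.
Qed.

Lemma pauli_str_trM (s r : pstring q) :
  \tr (P s *m P r) = if s == r then (2 ^ q)%:R else 0.
Proof.
have [->|neq_sr] := eqVneq s r; first by rewrite pauli_str_sq mxtrace1.
by rewrite pauli_strM mxtraceZ pauli_str_tr mulstr_eq_id (negPf neq_sr) mulr0.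
Qed.

Lemma scalar_mx_pow2_inj : injective (fun c : C => (c%:M : 'M[C]_(2 ^ q))).
Proof.
pose i0 := Ordinal (expn_gt0 2 q).
by move=> c d /matrixP/(_ i0 i0); rewrite !mxE eqxx.
Qed.

Lemma dim_neq0 : ((2 ^ q)%:R : C) != 0.
Proof. by rewrite pnatr_eq0 expn_eq0. Qed.

Lemma mx1_neq0 : (1%:M : 'M[C]_(2 ^ q)) != 0.
Proof.
apply: contra_neq dim_neq0 => /(congr1 mxtrace).
by rewrite mxtrace1 mxtrace0.
Qed.

Lemma pauli_str_scalar (s : pstring q) (c : C) : P s = c%:M -> s = idstr.
Proof.
move=> Ps_scalar; apply/eqP/negPn/negP => neq_s.
have /eqP := congr1 mxtrace Ps_scalar.
rewrite pauli_str_tr (negPf neq_s) mxtrace_scalar eq_sym mulrn_eq0 expn_eq0 /= => /eqP c0.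
by move/eqP: (pauli_str_sq s); rewrite Ps_scalar c0 mul_scalar_mx scale0r eq_sym (negPf mx1_neq0).
Qed.

End PauliStrings.

Section NormalisedPaulis.
Variables (C : numClosedFieldType) (q : nat).
Local Notation P := (pauli_str C).
Local Notation sig := (sigq C).

Definition pnorm : C := (sqrtC (2 ^ q)%:R)^-1.

Lemma sigqE (t : Sig q) : sig t = pnorm *: P (val t).
Proof. by []. Qed.

Lemma pnorm_neq0 : pnorm != 0.
Proof. by rewrite invr_eq0 sqrtC_eq0 dim_neq0. Qed.

Lemma pnorm_sqr : pnorm * pnorm * (2 ^ q)%:R = 1.
Proof. by rewrite -invrM ?unitfE ?sqrtC_eq0 ?dim_neq0 // -expr2 sqrtCK mulVf ?dim_neq0. Qed.

Lemma pnorm_real : pnorm^* = pnorm.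
Proof. by rewrite geC0_conj // invr_ge0 sqrtC_ge0 ler0n. Qed.

Lemma sigq_adj (t : Sig q) : adjmx (sig t) = sig t.
Proof. by rewrite sigqE adjmxZ pnorm_real pauli_str_adj. Qed.

Lemma mxtrace_sigq (t : Sig q) : \tr (sig t) = 0.
Proof. by rewrite sigqE mxtraceZ pauli_str_tr (negPf (valP t)) mulr0. Qed.

Lemma sigq_sq (t : Sig q) : sig t *m sig t = (pnorm * pnorm)%:M.
Proof. by rewrite sigqE -scalemxAl -scalemxAr pauli_str_sq scalerA scalemx1. Qed.

Lemma sigq_trM (s t : Sig q) : \tr (sig s *m sig t) = (s == t)%:R.
Proof.
rewrite !sigqE -scalemxAl -scalemxAr scalerA mxtraceZ pauli_str_trM.
have [->|neq_st] := eqVneq s t; first by rewrite eqxx pnorm_sqr.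
by rewrite ifF ?mulr0 //; apply: contraNF neq_st => /eqP/val_inj->.
Qed.

Lemma sigqM_neq0 (a b : Sig q) : sig a *m sig b != 0.
Proof.
apply/eqP => Mab0; have := sigq_trM a a; rewrite eqxx.
have -> : sig a = (pnorm * pnorm)^-1 *: (sig a *m sig b *m sig b).
  by rewrite -mulmxA sigq_sq mul_mx_scalar scalerA mulVf ?scale1r // mulf_neq0 ?pnorm_neq0.
by rewrite Mab0 mul0mx scaler0 mul0mx mxtrace0 => /eqP; rewrite eq_sym oner_eq0.
Qed.

End NormalisedPaulis.

Section CliffordGroup.
Variables (C : numClosedFieldType) (q : nat).
Local Notation P := (pauli_str C).
Local Notation sig := (sigq C).
Local Notation "'M" := 'M[C]_(2 ^ q).

Lemma pauli_grp_str (s : pstring q) : pauli_grp (P s).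
Proof. by exists 0%N, s; rewrite scale1r. Qed.

Lemma pauli_grpZ (m : nat) (X : 'M) : pauli_grp X -> pauli_grp ('i ^+ m *: X).
Proof. by case=> k [s ->]; exists (m + k)%N, s; rewrite scalerA exprD. Qed.

Lemma pauli_grpN (X : 'M) : pauli_grp X -> pauli_grp (- X).
Proof. by move/(pauli_grpZ 2); rewrite sqrCi scaleN1r. Qed.

Lemma pauli_grp_sign (b : bool) (X : 'M) : pauli_grp X -> pauli_grp ((-1) ^+ b *: X).
Proof. by case: b => [/pauli_grpN|]; rewrite ?scaleN1r ?scale1r. Qed.

Lemma pauli_grpM (X Y : 'M) : pauli_grp X -> pauli_grp Y -> pauli_grp (X *m Y).
Proof.
case=> k [s ->] [m [r ->]]; rewrite -scalemxAl -scalemxAr pauli_strM !scalerA -!exprD.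
exact/pauli_grpZ/pauli_grp_str.
Qed.

Lemma clifford_mul (U V : 'M) : clifford U -> clifford V -> clifford (U *m V).
Proof.
case=> unit_U cliff_U [unit_V cliff_V]; split.
  by rewrite /unitary adjmxM mulmxA -(mulmxA U) unit_V mulmx1 unit_U.
by move=> X /cliff_V /cliff_U; rewrite adjmxM !mulmxA.
Qed.

Definition sends_pm (U : 'M) (t s : Sig q) : Prop :=
  exists b : bool, U *m sig t *m adjmx U = (-1) ^+ b *: sig s.

Lemma sends_pm_mul (U V : 'M) (t s r : Sig q) :
  sends_pm V t s -> sends_pm U s r -> sends_pm (U *m V) t r.
Proof.
case=> b1 V_ts [b2 U_sr]; exists (b1 (+) b2).
by rewrite conjmx_mul V_ts -scalemxAr -scalemxAl U_sr scalerA signr_addb mulrC.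
Qed.

Lemma sends_pm_adj (U : 'M) (t s : Sig q) :
  unitary U -> sends_pm U t s -> sends_pm (adjmx U) s t.
Proof.
move=> unit_U [b U_ts]; exists b.
rewrite adjmxK -(unitary_conjK (sig t) unit_U) U_ts.
by rewrite -(scalemxAr ((-1) ^+ b)) -(scalemxAl ((-1) ^+ b)) scalerA -expr2 sqrr_sign scale1r.
Qed.

Lemma clifford_tauP (tau : Sig q) (U : 'M) :
  clifford U -> sends_pm U tau tau -> clifford_tau tau U.
Proof. by move=> cliff_U [[] U_tau]; split; rewrite // U_tau ?scaleN1r ?scale1r; [right|left]. Qed.

Lemma clifford_sends_pm (U : 'M) (t : Sig q) : clifford U -> exists s, sends_pm U t s.
Proof.
case=> unit_U cliff_U; have [k [r U_t]] := cliff_U _ (pauli_grp_str (val t)).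
have neq_r : r != idstr q.
  apply: contra_neq (valP t) => r_id; apply: (@pauli_str_scalar C q _ ('i ^+ k)).
  rewrite -(unitary_conjK (P (val t)) unit_U) U_t r_id pauli_str_id scalemx1 mul_mx_scalar.
  by rewrite -scalemxAl (mulmx1C unit_U) scalemx1.
have sign_k : ('i ^+ k) ^+ 2 = 1 :> C.
  apply: scalar_mx_pow2_inj; have := unitary_conjM (P (val t)) (P (val t)) unit_U.
  rewrite U_t -(scalemxAl ('i ^+ k)) -(scalemxAr ('i ^+ k)) !pauli_str_sq mulmx1 unit_U.
  by rewrite scalerA -expr2 scalemx1; apply.
exists (exist _ r neq_r); rewrite /sends_pm !sigqE -scalemxAr -scalemxAl U_t.
rewrite scalerA mulrC -scalerA /=.
move/eqP: sign_k; rewrite sqrf_eq1 => /orP[/eqP->|/eqP->].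
  by exists false; rewrite scale1r.
by exists true; rewrite expr1.
Qed.

End CliffordGroup.

Lemma anticomm_sandwich (R : comNzRingType) n (A B X : 'M[R]_n) (al be : R) :
  A *m A = 1%:M -> B *m B = 1%:M -> B *m A = - (A *m B) ->
  A *m X = al *: (X *m A) -> B *m X = be *: (X *m B) ->
  (A + B) *m X *m (A + B) = (al + be) *: X + (al - be) *: (X *m A *m B).
Proof.
move=> AA1 BB1 anti_AB AX BX.
have AXA : A *m X *m A = al *: X by rewrite AX -scalemxAl -mulmxA AA1 mulmx1.
have AXB : A *m X *m B = al *: (X *m A *m B) by rewrite AX -scalemxAl.
have BXA : B *m X *m A = - be *: (X *m A *m B).
  by rewrite BX -scalemxAl -mulmxA anti_AB mulmxN scaleNr scalerN mulmxA.
have BXB : B *m X *m B = be *: X by rewrite BX -scalemxAl -mulmxA BB1 mulmx1.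
rewrite mulmxDl !mulmxDr !mulmxDl AXA AXB BXA BXB scalerDl scalerBl scaleNr.
by rewrite addrACA [- _ + _]addrC addrACA.
Qed.

Section Transitivity.
Variables (C : numClosedFieldType) (q : nat).
Local Notation P := (pauli_str C).
Local Notation "'M" := 'M[C]_(2 ^ q).

Definition inv_sqrt2 : C := (sqrtC 2)^-1.

Lemma inv_sqrt2_sqr : inv_sqrt2 * inv_sqrt2 * 2 = 1.
Proof.
have two_neq0 : (2 : C) != 0 by rewrite pnatr_eq0.
by rewrite -invrM ?unitfE ?sqrtC_eq0 // -expr2 sqrtCK mulVf.
Qed.

Lemma inv_sqrt2_real : inv_sqrt2^* = inv_sqrt2.
Proof. by rewrite geC0_conj // invr_ge0 sqrtC_ge0 ler0n. Qed.

Lemma half_sign_combination (X Y : 'M) (b1 b2 : bool) :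
  (inv_sqrt2 * inv_sqrt2) *: (((-1) ^+ b1 + (-1) ^+ b2) *: X + ((-1) ^+ b1 - (-1) ^+ b2) *: Y)
    = (-1) ^+ b1 *: (if b1 == b2 then X else Y).
Proof.
have half2 Z : (inv_sqrt2 * inv_sqrt2) *: ((1 + 1) *: Z) = Z.
  by rewrite -mulr2n scalerA inv_sqrt2_sqr scale1r.
by case: b1; case: b2;
  rewrite /= ?(expr0, expr1, subrr, addrN, addNr, opprK, scale0r, addr0, add0r, scale1r, scaleN1r)
          -?opprD ?scaleNr ?scalerN ?half2.
Qed.

Definition pswap (a b : pstring q) : 'M := inv_sqrt2 *: (P a + P b).

Section Swap.
Variables a b : pstring q.
Hypothesis anti_ab : odd (anti_str a b).

Lemma pauli_str_anti : P b *m P a = - (P a *m P b).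
Proof. by rewrite pauli_str_comm -signr_odd anti_ab expr1 scaleN1r. Qed.

Lemma pswap_adj : adjmx (pswap a b) = pswap a b.
Proof. by rewrite adjmxZ adjmxD !pauli_str_adj inv_sqrt2_real. Qed.

Lemma pswap_sandwich (X : 'M) (al be : C) :
    P a *m X = al *: (X *m P a) -> P b *m X = be *: (X *m P b) ->
  pswap a b *m X *m adjmx (pswap a b) =
    (inv_sqrt2 * inv_sqrt2) *: ((al + be) *: X + (al - be) *: (X *m P a *m P b)).
Proof.
move=> aX bX; rewrite pswap_adj -!scalemxAl -scalemxAr scalerA.
by rewrite (anticomm_sandwich (pauli_str_sq C a) (pauli_str_sq C b) pauli_str_anti aX bX).
Qed.

Lemma pswap_unitary : unitary (pswap a b).
Proof.
have := @pswap_sandwich 1%:M 1 1; rewrite !mulmx1 !mul1mx !scale1r => /(_ erefl erefl).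
by rewrite subrr scale0r addr0 -mulr2n scalerA inv_sqrt2_sqr scale1r.
Qed.

Lemma pswap_pauli : pswap a b *m P a *m adjmx (pswap a b) = P b.
Proof.
rewrite (@pswap_sandwich _ 1 (-1)) ?scale1r ?scaleN1r ?pauli_str_anti //.
by rewrite addrN scale0r add0r opprK -mulr2n pauli_str_sq mul1mx scalerA inv_sqrt2_sqr scale1r.
Qed.

Lemma pswap_clifford : clifford (pswap a b).
Proof.
split; first exact: pswap_unitary.
move=> _ [k [r ->]]; rewrite -scalemxAr -scalemxAl; apply: pauli_grpZ.
rewrite (pswap_sandwich (pauli_str_comm C r a) (pauli_str_comm C r b)).
rewrite -(signr_odd _ (anti_str r a)) -(signr_odd _ (anti_str r b)) half_sign_combination.
case: eqP => _; apply: pauli_grp_sign; first exact: pauli_grp_str.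
exact/pauli_grpM/pauli_grp_str/pauli_grpM/pauli_grp_str/pauli_grp_str.
Qed.

End Swap.

Definition pauli_at (l : 'I_q) (y : 'I_4) : pstring q :=
  [ffun k => if k == l then y else ord0].

Definition pauli_at2 (k l : 'I_q) (y z : 'I_4) : pstring q :=
  [ffun x => if x == k then y else if x == l then z else ord0].

Lemma panti_id_r (a : 'I_4) : panti a ord0 = false.
Proof. by rewrite /panti andbF. Qed.

Lemma anti_str_at (a : pstring q) l y : anti_str a (pauli_at l y) = panti (a l) y.
Proof.
rewrite /anti_str (bigD1 l) //= big1 ?addn0 => [|k /negPf neq_kl]; first by rewrite ffunE eqxx.
by rewrite ffunE neq_kl panti_id_r.
Qed.

Lemma anti_str_at2 (a : pstring q) k l y z : k != l ->
  anti_str a (pauli_at2 k l y z) = (panti (a k) y + panti (a l) z)%N.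
Proof.
move=> neq_kl; rewrite /anti_str (bigD1 k) //= (bigD1 l) 1?eq_sym //= big1 ?addn0.
  by rewrite !ffunE eqxx eq_sym (negPf neq_kl) eqxx.
by move=> x /andP[/negPf neq_xk /negPf neq_xl]; rewrite ffunE neq_xk neq_xl panti_id_r.
Qed.

Lemma exists_anti_str (a b : pstring q) : a != idstr q -> b != idstr q ->
  exists r, odd (anti_str a r) && odd (anti_str b r).
Proof.
(* On a site where both strings act, use a letter anticommuting with both;
   otherwise their supports are disjoint and one letter on each suffices. *)
rewrite !neq_idstr => /existsP[k nz_ak] /existsP[l nz_bl].
have [/existsP[m /andP[nz_am nz_bm]]|] :=
  boolP [exists m, (val (a m) != 0%N) && (val (b m) != 0%N)].
  have [eq_abm|neq_abm] := eqVneq (val (a m)) (val (b m)).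
    exists (pauli_at m (partner (a m))); rewrite !anti_str_at panti_partner //.
    by rewrite (val_inj eq_abm) panti_partner -?eq_abm.
  exists (pauli_at m (pmul (a m) (b m))); rewrite !anti_str_at.
  by case/andP: (panti_pmul nz_am nz_bm neq_abm) => -> ->.
rewrite negb_exists => /forallP disjoint_ab.
have z_bk : val (b k) == 0%N by move: (disjoint_ab k); rewrite nz_ak negbK.
have z_al : val (a l) == 0%N by move: (disjoint_ab l); rewrite nz_bl andbT negbK.
have neq_kl : k != l by apply: contraNneq nz_ak => ->.
exists (pauli_at2 k l (partner (a k)) (partner (b l))).
by rewrite !anti_str_at2 // !panti_partner // /panti (eqP z_al) (eqP z_bk).
Qed.

Lemma clifford_transitive (tau t : Sig q) :
  exists U : 'M, [/\ clifford U, clifford (adjmx U) & sends_pm U tau t].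
Proof.
have [r /andP[anti_tau_r]] := exists_anti_str (valP tau) (valP t).
rewrite anti_strC => anti_r_t.
exists (pswap r (val t) *m pswap (val tau) r); split.
- by apply: clifford_mul; apply: pswap_clifford.
- by rewrite adjmxM !pswap_adj //; apply: clifford_mul; apply: pswap_clifford.
exists false; rewrite scale1r !sigqE -scalemxAr -scalemxAl conjmx_mul.
by rewrite pswap_pauli // pswap_pauli.
Qed.

End Transitivity.

Lemma directv_sum_subv (K : fieldType) (vT : vectType K) (I : finType)
    (Us Vs : I -> {vspace vT}) :
  (forall i, (Us i <= Vs i)%VS) -> directv (\sum_i Vs i) -> directv (\sum_i Us i).
Proof.
move=> sUV /directv_sum_independent dxV; apply/directv_sum_independent => us Uu.
by apply: dxV => i _; apply: subvP (sUV i) _ (Uu i isT).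
Qed.

Section HilbertSchmidt.
Variables (C : numClosedFieldType) (n : nat).
Local Notation "'M" := 'M[C]_n.

Definition hsdot (X Y : 'M) : C := \tr (adjmx X *m Y).

Lemma hsdot_is_linear X : linear_for *%R (hsdot X).
Proof. by move=> a Y Z; rewrite /hsdot mulmxDr -scalemxAr mxtraceD mxtraceZ. Qed.

HB.instance Definition _ X := GRing.isLinear.Build _ _ _ _ (hsdot X) (hsdot_is_linear X).

Lemma hsdotC X Y : hsdot X Y = (hsdot Y X)^*.
Proof.
rewrite /hsdot -mxtrace_tr trmx_mul /mxtrace rmorph_sum; apply: eq_bigr => i _.
by rewrite !mxE rmorph_sum; apply: eq_bigr => j _; rewrite !mxE rmorphM /= conjCK mulrC.
Qed.

Lemma hsdot_eq0 X : hsdot X X = 0 -> X = 0.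
Proof.
have norm2 i j : (adjmx X) i j * X j i = `|X j i| ^+ 2 by rewrite !mxE mulrC -normCK.
rewrite /hsdot /mxtrace => /eqP; rewrite psumr_eq0 => [/allP X0|i _].
  apply/matrixP => j i; apply/eqP; rewrite mxE -normr_eq0 -sqrf_eq0 -norm2.
  move: (X0 i (mem_index_enum i)); rewrite mxE psumr_eq0 => [/allP/(_ j (mem_index_enum j))//|k _].
  by rewrite norm2 exprn_ge0.
by rewrite mxE sumr_ge0 // => j _; rewrite norm2 exprn_ge0.
Qed.

Lemma hsdot_span_eq0 (S T : seq 'M) X Y :
  {in S & T, forall A B, hsdot A B = 0} ->
  X \in <<S>>%VS -> Y \in <<T>>%VS -> hsdot X Y = 0.
Proof.
move=> ST0 /(@coord_span _ _ _ (in_tuple S)) -> /(@coord_span _ _ _ (in_tuple T)) ->.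
rewrite linear_sum big1 // => j _; rewrite linearZ /= hsdotC linear_sum rmorph_sum big1 ?mulr0 //.
by move=> i _; rewrite linearZ /= hsdotC ST0 ?rmorph0 ?mulr0 ?conjC0 ?mem_nth.
Qed.

Lemma directv_hsdot_orthogonal (I : finType) (Vs : I -> {vspace 'M}) :
  (forall i j X Y, i != j -> X \in Vs i -> Y \in Vs j -> hsdot X Y = 0) ->
  directv (\sum_i Vs i).
Proof.
move=> orthV; apply/directv_sum_independent => us Vu sum_u0 i _; apply: hsdot_eq0.
have := linear0 (hsdot (us i)); rewrite -sum_u0 linear_sum (bigD1 i) //= big1 ?addr0 //.
by move=> j neq_ji; apply: (orthV i j); rewrite 1?eq_sym ?Vu.
Qed.

End HilbertSchmidt.

Lemma hsdot_tprod (C : numClosedFieldType) m n (A1 A2 : 'M[C]_m) (B1 B2 : 'M[C]_n) :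
  hsdot (tprod A1 B1) (tprod A2 B2) = hsdot A1 A2 * hsdot B1 B2.
Proof. by rewrite /hsdot adjmx_tprod -tprodE mxtrace_prod. Qed.

Section TwoCopy.
Variables (C : numClosedFieldType) (q : nat).
Local Notation sig := (sigq C).
Local Notation "'M" := 'M[C]_(2 ^ q).
Local Notation "'MM" := 'M[C]_(2 ^ q * 2 ^ q).

Lemma phi2_mul (A B : 'M) X : phi2 A (phi2 B X) = phi2 (A *m B) X.
Proof. by rewrite /phi2 tprodE adjmxM !mulmxA. Qed.

Lemma phi2_tprod (U X Y : 'M) :
  phi2 U (tprod X Y) = tprod (U *m X *m adjmx U) (U *m Y *m adjmx U).
Proof. by rewrite /phi2 adjmx_tprod !tprodE. Qed.

Lemma phi2_is_linear (U : 'M) : linear (phi2 U).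
Proof. by move=> a X Y; rewrite /phi2 mulmxDr mulmxDl -scalemxAr -scalemxAl. Qed.

HB.instance Definition _ (U : 'M) :=
  GRing.isSemilinear.Build C _ _ _ (phi2 U) (GRing.semilinear_linear (phi2_is_linear U)).

Definition phi2_lfun (U : 'M) : 'End('MM) := linfun (phi2 U).

Lemma phi2_lfunE U X : phi2_lfun U X = phi2 U X.
Proof. by rewrite lfunE. Qed.

Lemma phi2_adjK (U : 'M) X : unitary U -> phi2 (adjmx U) (phi2 U X) = X.
Proof. by move=> unit_U; rewrite phi2_mul (mulmx1C unit_U) /phi2 tprod1 adjmx1 mul1mx mulmx1. Qed.

Lemma lker_phi2_lfun U : unitary U -> lker (phi2_lfun U) = 0%VS.
Proof.
move=> unit_U; apply/eqP/lker0P => X Y; rewrite !phi2_lfunE => eq_XY.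
by rewrite -(phi2_adjK X unit_U) eq_XY phi2_adjK.
Qed.

Lemma mem_Vtau (t a b : Sig q) : sig a *m sig b \in <[sig t]>%VS ->
  tprod (sig a) (sig b) \in Vtau C t.
Proof.
by move=> ab_t; apply/memv_span/mapP; exists (a, b); rewrite // mem_filter ab_t mem_enum.
Qed.

Lemma mem_Vspace (a b : Sig q) : sig a != sig b -> tprod (sig a) (sig b) \in Vspace C q.
Proof.
by move=> neq_ab; apply/memv_span/mapP; exists (a, b); rewrite // mem_filter neq_ab mem_enum.
Qed.

Lemma Vtau_genP (t : Sig q) (X : 'MM) :
  X \in [seq tprod (sig st.1) (sig st.2) | st <- enum ((Sig q * Sig q)%type : predArgType)
           & (sig st.1 *m sig st.2) \in <[sig t]>%VS] ->
  exists a b, [/\ X = tprod (sig a) (sig b) & sig a *m sig b \in <[sig t]>%VS].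
Proof. by case/mapP => -[a b]; rewrite mem_filter => /andP[ab_t _] ->; exists a, b. Qed.

Lemma phi2_Vtau (U : 'M) (tau t : Sig q) :
  clifford U -> sends_pm U tau t -> (phi2_lfun U @: Vtau C tau <= Vtau C t)%VS.
Proof.
move=> [unit_U cliff_U] [b U_tau].
rewrite limg_span; apply/span_subvP => _ /mapP[X /Vtau_genP[a [c [-> /vlineP[k ac_tau]]]] ->].
have [a' [ba U_a]] := clifford_sends_pm a (conj unit_U cliff_U).
have [c' [bc U_c]] := clifford_sends_pm c (conj unit_U cliff_U).
rewrite phi2_lfunE phi2_tprod U_a U_c tprodZ; apply/rpredZ/mem_Vtau.
have -> : sig a' *m sig c' = ((-1) ^+ ba * (-1) ^+ bc) *:
    ((U *m sig a *m adjmx U) *m (U *m sig c *m adjmx U)).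
  rewrite U_a U_c -(scalemxAl ((-1) ^+ ba)) -(scalemxAr ((-1) ^+ bc)) !scalerA.
  by rewrite -mulrA mulrACA -!expr2 !sqrr_sign mulr1 scale1r.
rewrite unitary_conjM // ac_tau.
by rewrite -(scalemxAr k) -scalemxAl U_tau; apply/rpredZ/rpredZ/rpredZ/memv_line.
Qed.

End TwoCopy.

Section Decomposition.
Variables (C : numClosedFieldType) (q : nat).
Local Notation sig := (sigq C).
Local Notation "'MM" := 'M[C]_(2 ^ q * 2 ^ q).

Lemma hsdot_sigq (s t : Sig q) : hsdot (sig s) (sig t) = (s == t)%:R.
Proof. by rewrite /hsdot sigq_adj sigq_trM. Qed.

Lemma sigq_lines_disjoint (s t : Sig q) X : s != t ->
  X \in <[sig s]>%VS -> X \in <[sig t]>%VS -> X = 0.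
Proof.
move=> neq_st /vlineP[k ->] /vlineP[m X_t]; apply: hsdot_eq0.
rewrite {2}X_t linearZ /= hsdotC linearZ /= hsdot_sigq eq_sym (negPf neq_st).
by rewrite mulr0 rmorph0 mulr0.
Qed.

Lemma hsdot_Vtau_gen (s t a b c d : Sig q) : s != t ->
  sig a *m sig b \in <[sig s]>%VS -> sig c *m sig d \in <[sig t]>%VS ->
  hsdot (tprod (sig a) (sig b)) (tprod (sig c) (sig d)) = 0.
Proof.
move=> neq_st ab_s cd_t; rewrite hsdot_tprod !hsdot_sigq.
have [eq_ac|] := eqVneq a c; last by rewrite mul0r.
have [eq_bd|] := eqVneq b d; last by rewrite mulr0.
rewrite -eq_ac -eq_bd in cd_t.
by have := sigqM_neq0 C a b; rewrite (sigq_lines_disjoint neq_st ab_s cd_t) eqxx.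
Qed.

Lemma hsdot_Vtau (s t : Sig q) (X Y : 'MM) : s != t ->
  X \in Vtau C s -> Y \in Vtau C t -> hsdot X Y = 0.
Proof.
move=> neq_st; apply: hsdot_span_eq0 => _ _ /Vtau_genP[a [b [-> ab_s]]] /Vtau_genP[c [d [-> cd_t]]].
exact: hsdot_Vtau_gen ab_s cd_t.
Qed.

Lemma directv_Vtau : directv (\sum_(t : Sig q) Vtau C t).
Proof. by apply: directv_hsdot_orthogonal => s t X Y; apply: hsdot_Vtau. Qed.

Lemma Vspace_sum_Vtau : Vspace C q = (\sum_(t : Sig q) Vtau C t)%VS.
Proof.
apply/eqP; rewrite eqEsubv; apply/andP; split.
  apply/span_subvP => X /mapP[[a b]]; rewrite mem_filter /= => /andP[neq_ab _] ->.
  have neq_id : mulstr (val a) (val b) != idstr q.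
    by rewrite mulstr_eq_id; apply: contraNneq neq_ab => /val_inj->.
  pose t : Sig q := exist _ (mulstr (val a) (val b)) neq_id.
  apply: (subvP (sumv_sup t _ (subvv _))) => //; apply/mem_Vtau/vlineP.
  exists (pnorm C q * 'i ^+ phase_str (val a) (val b)).
  by rewrite !sigqE -scalemxAl -scalemxAr pauli_strM !scalerA mulrAC.
apply/subv_sumP => t _; apply/span_subvP => _ /Vtau_genP[a [b [-> /vlineP[k ab_t]]]].
apply/mem_Vspace/eqP => eq_ab.
have := congr1 mxtrace ab_t; rewrite eq_ab sigq_trM eqxx mxtraceZ mxtrace_sigq mulr0.
by move/eqP; rewrite oner_eq0.
Qed.

End Decomposition.

Section CliffordOrbit.
Variables (C : numClosedFieldType) (q : nat) (tau : Sig q).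
Local Notation "'M" := 'M[C]_(2 ^ q).
Local Notation "'MM" := 'M[C]_(2 ^ q * 2 ^ q).
Variable Ut : Sig q -> 'M.
Hypothesis Ut_spec :
  forall t, [/\ clifford (Ut t), clifford (adjmx (Ut t)) & sends_pm (Ut t) tau t].
Variable Wt : {vspace 'MM}.
Hypothesis Wt_stable : forall U, clifford_tau tau U -> phi2_stable U Wt.

Definition orbit_space (t : Sig q) : {vspace 'MM} := (phi2_lfun (Ut t) @: Wt)%VS.

Lemma orbit_space_tau : orbit_space tau = Wt.
Proof.
have [cliff_U _ U_tau] := Ut_spec tau.
apply/eqP; rewrite eqEdim limg_dim_eq ?lker_phi2_lfun ?capv0 ?leqnn ?andbT //;
  last by case: cliff_U.
apply/subvP => _ /memv_imgP[Y WY ->]; rewrite phi2_lfunE.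
exact: Wt_stable (clifford_tauP cliff_U U_tau) _ WY.
Qed.

Lemma orbit_space_sub t : (Wt <= Vtau C tau)%VS -> (orbit_space t <= Vtau C t)%VS.
Proof.
have [cliff_U _ U_t] := Ut_spec t.
by move=> Wt_sub; apply: subv_trans (limgS _ Wt_sub) (phi2_Vtau cliff_U U_t).
Qed.

Lemma orbit_space_iso t : vs_iso Wt (orbit_space t).
Proof.
have [[unit_U _] _ _] := Ut_spec t.
by exists (phi2_lfun (Ut t)); rewrite lker_phi2_lfun ?cap0v.
Qed.

Lemma orbit_space_stable U : clifford U -> phi2_stable U (\sum_t orbit_space t).
Proof.
move=> cliff_U _ /memv_sumP[xs xs_orb ->]; rewrite linear_sum; apply: rpred_sum => t _.
have /memv_imgP[Y WY ->] := xs_orb t isT.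
have [s U_ts] := clifford_sends_pm t cliff_U.
have [cliff_Ut _ Ut_t] := Ut_spec t.
have [[unit_Us _] cliff_Us' Us_s] := Ut_spec s.
pose W := adjmx (Ut s) *m U *m Ut t.
have W_tau : clifford_tau tau W.
  apply: clifford_tauP; first exact: clifford_mul (clifford_mul cliff_Us' cliff_U) cliff_Ut.
  exact: sends_pm_mul Ut_t (sends_pm_mul U_ts (sends_pm_adj unit_Us Us_s)).
rewrite /=; have -> : phi2 U (phi2_lfun (Ut t) Y) = phi2_lfun (Ut s) (phi2 W Y).
  by rewrite !phi2_lfunE !phi2_mul /W !mulmxA unit_Us mul1mx.
by apply: (subvP (sumv_sup s _ (subvv _))) => //; apply/memv_img/Wt_stable.
Qed.

End CliffordOrbit.

Theorem lemma7 (C : numClosedFieldType) (q : nat) (hq : (1 <= q)%N) :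
  (* (1) *)
  (Vspace C q = (\sum_(t : Sig q) Vtau C t)%VS
   /\ directv (\sum_(t : Sig q) Vtau C t)%VS)
  /\
  (* (2) *)
  (forall (tau : Sig q) (Wt : {vspace 'M[C]_(2 ^ q * 2 ^ q)}),
     (Wt <= Vtau C tau)%VS ->
     (forall U : 'M[C]_(2 ^ q), clifford_tau tau U -> phi2_stable U Wt) ->
     exists Wf : Sig q -> {vspace 'M[C]_(2 ^ q * 2 ^ q)},
       Wf tau = Wt /\
       (forall t, (Wf t <= Vtau C t)%VS /\ vs_iso Wt (Wf t)) /\
       directv (\sum_(t : Sig q) Wf t)%VS /\
       (forall U : 'M[C]_(2 ^ q), clifford U ->
          phi2_stable U (\sum_(t : Sig q) Wf t)%VS)).
Proof.
split; first by split; [exact: Vspace_sum_Vtau | exact: directv_Vtau].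
move=> tau Wt Wt_sub Wt_stable.
have [Ut Ut_spec] := fin_all_exists (clifford_transitive C tau).
have orbit_sub t := orbit_space_sub Ut_spec t Wt_sub.
exists (orbit_space Ut Wt); split; first exact: orbit_space_tau.
split; first by move=> t; split; [exact: orbit_sub | exact: orbit_space_iso].
split; first exact: directv_sum_subv orbit_sub (directv_Vtau C q).
exact: orbit_space_stable.
Qed.
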